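(* Let $R$ be a ring with unit and let $C$ be a bounded chain complex of finitely generated free $R[x,x^{-1}]$-modules. Then there exists a strict perfect complex of sheaves $\mathcal{V} = (V^- \xrightarrow{\mu^-} V \xleftarrow{\mu^+} V^+)$ on $\mathbb{P}^1$ such that: (1) the complexes $V^-$ and $V^+$ consist of finitely generated free $R[x^{-1}]$- and $R[x]$-modules, respectively; (2) the complex $V$ is isomorphic to $C$; (3) the complex of global sections $H^0(\mathbb{P}^1;\mathcal{V})$, given in each degree $n$ by $\ker(-\mu^-+\mu^+\colon V^-_n\oplus V^+_n\to V_n)$, is a bounded complex of finitely generated free $R$-modules; (4) $H^j(\mathbb{P}^1;\mathcal{V}) = 0$ in each chain degree for all $j\geq 1$; that is, $-\mu^-+\mu^+\colon V^-_n\oplus V^+_n\to V_n$ is surjective for every $n$.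
   Context: Modules are right modules. A sheaf on $\mathbb{P}^1$ over $R$ is a diagram $M^- \xrightarrow{\mu^-} M \xleftarrow{\mu^+} M^+$ where $M^-$ is an $R[x^{-1}]$-module, $M$ an $R[x,x^{-1}]$-module, $M^+$ an $R[x]$-module, $\mu^-$ is $R[x^{-1}]$-linear, $\mu^+$ is $R[x]$-linear, and the adjoint maps $M^-\otimes_{R[x^{-1}]}R[x,x^{-1}]\to M$ and $M^+\otimes_{R[x]}R[x,x^{-1}]\to M$ are isomorphisms; morphisms are compatible triples of linear maps. A vector bundle is a sheaf whose three entries are finitely generated projective over their respective rings; a strict perfect complex of sheaves is a bounded chain complex of vector bundles. For a sheaf $\mathcal{M}$ the cohomology modules are $H^0(\mathbb{P}^1;\mathcal{M}) = \ker(-\mu^-+\mu^+\colon M^-\oplus M^+\to M)$, $H^1(\mathbb{P}^1;\mathcal{M}) = \mathrm{coker}(-\mu^-+\mu^+)$, and $H^j = 0$ for $j\ne 0,1$; these are $R$-modules. *)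

From HB Require Import structures.
From mathcomp Require Import all_boot all_order all_algebra.

Set Implicit Arguments.
Unset Strict Implicit.
Unset Printing Implicit Defensive.

Import Order.TTheory GRing.Theory Num.Theory.
Local Open Scope ring_scope.

(* The Laurent polynomial ring R[x,x^-1], given by its defining        *)
(* property: L is a ring with an injective ring morphism               *)
(* iota : R[x] -> L such that iota 'X is invertible with inverse y and *)
(* every element of L is of the form iota p * y^k (= p x^-k).          *)
(* Such (L, iota) is unique up to unique isomorphism over R[x]: it is  *)
(* the localization of R[x] at the central element x.                  *)
Definition is_laurent (R L : nzRingType) (iota : {rmorphism {poly R} -> L})
  (y : L) : Prop :=
  [/\ iota 'X * y = 1, y * iota 'X = 1, injective iota &
      forall l : L, exists (p : {poly R}) (k : nat), l = iota p * y ^+ k].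

(* R[x^-1] is modelled as {poly R} (variable t standing for x^-1);    *)
(* its inclusion into R[x,x^-1] sends t to y = x^-1.                   *)
Definition laurent_minus (R L : nzRingType) (iota : {rmorphism {poly R} -> L})
  (y : L) (q : {poly R}) : L :=
  \sum_(i < size q) iota (q`_i)%:P * y ^+ i.

(* Chain complexes of finitely generated free RIGHT A-modules,         *)
(* indexed by int: the module in degree n is A^(rk n) (column vectors, *)
(* A acting on the right), the differential d_n : A^(rk n) ->          *)
(* A^(rk (n-1)) is left multiplication by the matrix dif n.            *)
Record fcomplex (A : nzRingType) := FComplex {
  rk : int -> nat;
  dif : forall n : int, 'M[A]_(rk (n - 1)%R, rk n)
}.

Definition is_complex (A : nzRingType) (C : fcomplex A) : Prop :=
  forall n : int, dif C (n - 1) *m dif C n = 0.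

Definition bounded_cx (A : nzRingType) (C : fcomplex A) : Prop :=
  exists N : nat, forall n : int, (N < absz n)%N -> rk C n = 0%N.

Definition cx_iso (A : nzRingType) (V C : fcomplex A) : Prop :=
  exists phi : forall n : int, 'M[A]_(rk C n, rk V n),
    (forall n : int, dif C n *m phi n = phi (n - 1) *m dif V n) /\
    (forall n : int, bijective (fun v : 'cV[A]_(rk V n) => phi n *m v)).

(* Chain complexes of sheaves V^- --mu^- --> V <-- mu^+ -- V^+ on P^1 *)
(* whose three entries are finitely generated FREE over R[x^-1],       *)
(* R[x,x^-1], R[x] respectively.  mu^+_n : R[x]^(a) -> L^(k) is        *)
(* u |-> mup n *m iota(u) (R[x]-linear); mu^-_n : R[x^-1]^(b) -> L^(k) *)
(* is u |-> mum n *m j(u) with j = laurent_minus (R[x^-1]-linear).     *)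
Record fsheaf_cx (R L : nzRingType) := FSheafCx {
  Vm : fcomplex {poly R};   (* over R[x^-1] *)
  V0 : fcomplex L;
  Vp : fcomplex {poly R};   (* over R[x] *)
  mum : forall n : int, 'M[L]_(rk V0 n, rk Vm n);
  mup : forall n : int, 'M[L]_(rk V0 n, rk Vp n)
}.

Section SheafDefs.
Variables (R L : nzRingType) (iota : {rmorphism {poly R} -> L}) (y : L).
Local Notation jm := (laurent_minus iota y).

(* the adjoint maps V^(+-)_n (x) R[x,x^-1] -> V_n, which under         *)
(* R[x]^a (x) L = L^a are v |-> mup n *m v, are isomorphisms.          *)
Definition is_strict_perfect (V : fsheaf_cx R L) : Prop :=
  [/\ is_complex (Vm V) /\ is_complex (V0 V) /\ is_complex (Vp V),
      bounded_cx (Vm V) /\ bounded_cx (V0 V) /\ bounded_cx (Vp V),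
      (forall n : int, mum V (n - 1) *m map_mx jm (dif (Vm V) n)
                       = dif (V0 V) n *m mum V n) /\
      (forall n : int, mup V (n - 1) *m map_mx iota (dif (Vp V) n)
                       = dif (V0 V) n *m mup V n) &
      (forall n : int, bijective (fun v : 'cV[L]_(rk (Vm V) n) => mum V n *m v)) /\
      (forall n : int, bijective (fun v : 'cV[L]_(rk (Vp V) n) => mup V n *m v))].

Definition cech (V : fsheaf_cx R L) (n : int)
  (u : 'cV[{poly R}]_(rk (Vm V) n)) (w : 'cV[{poly R}]_(rk (Vp V) n))
  : 'cV[L]_(rk (V0 V) n) :=
  - (mum V n *m map_mx jm u) + mup V n *m map_mx iota w.

(* H^0(P^1; V_n) = ker(cech) is a finitely generated free (right)     *)
(* R-module: it has a finite R-basis (columns of Em, Ep), R acting on  *)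
(* the right through constant polynomials.                             *)
Definition H0_fg_free (V : fsheaf_cx R L) (n : int) : Prop :=
  exists (r : nat) (Em : 'M[{poly R}]_(rk (Vm V) n, r))
         (Ep : 'M[{poly R}]_(rk (Vp V) n, r)),
    (forall c : 'cV[R]_r,
        cech (Em *m map_mx polyC c) (Ep *m map_mx polyC c) = 0) /\
    (forall u w, cech u w = 0 ->
       exists! c : 'cV[R]_r,
         u = Em *m map_mx polyC c /\ w = Ep *m map_mx polyC c).

Definition H1_vanishes (V : fsheaf_cx R L) (n : int) : Prop :=
  forall v : 'cV[L]_(rk (V0 V) n), exists u w, cech u w = v.

End SheafDefs.

From mathcomp Require Import all_boot all_order all_algebra.
From mathcomp Require Import zify.

(* Take V = C, glued to V^+ and V^- by the central units mu^+ = x^(-b n) and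
   mu^- = x^(b n) of L = R[x,x^-1] in degree n.  If C is supported in [-N, N] and
   K is such that x^K d and x^-K d have entries in R[x] and R[x^-1] for every
   differential d of C, then b n := K * |N - n| makes consecutive twists differ by
   K on the support, so V^+ and V^- are free complexes with differentials x^K d
   and x^-K d.  In degree n the sheaf is a sum of copies of O(2 b n): a global
   section is a pair (u, w) with x^(2b) u(x^-1) = w(x), i.e. w of degree at most
   2b and u its reciprocal polynomial, so H^0 is free on the monomials x^j e_i;
   and H^1 = 0 because L = R[x^-1] + R[x]. *)

Set Implicit Arguments.
Unset Strict Implicit.
Unset Printing Implicit Defensive.
Import GRing.Theory.
Local Open Scope ring_scope.

Section Polynomials.
Variable R : nzRingType.

Lemma poly_coef_wide n (p : {poly R}) : (size p <= n)%N -> \poly_(i < n) p`_i = p.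
Proof.
move=> le_p_n; apply/polyP => k; rewrite coef_poly; case: ltnP => // le_n_k.
by rewrite nth_default // (leq_trans le_p_n le_n_k).
Qed.

Definition recip (g : nat) (p : {poly R}) : {poly R} := \poly_(i < g.+1) p`_(g - i).

Lemma size_recip g (p : {poly R}) : (size (recip g p) <= g.+1)%N.
Proof. exact: size_poly. Qed.

Lemma coef_recip g (p : {poly R}) i :
  (recip g p)`_i = if (i <= g)%N then p`_(g - i) else 0.
Proof. by rewrite coef_poly ltnS. Qed.

Lemma recipK g (p : {poly R}) : (size p <= g.+1)%N -> recip g (recip g p) = p.
Proof.
move=> le_p_g; apply/polyP => i; rewrite !coef_recip.
case: leqP => [le_i_g | lt_g_i]; first by rewrite leq_subr subKn.
by rewrite nth_default // (leq_trans le_p_g lt_g_i).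
Qed.

Lemma map_recip_mulmxC g m n (E : 'M[{poly R}]_(m, n)) (c : 'cV[R]_n) :
  map_mx (recip g) E *m map_mx polyC c = map_mx (recip g) (E *m map_mx polyC c).
Proof.
apply/matrixP => i k; apply/polyP => l; rewrite !mxE coef_recip !coef_sum.
case: leqP => [le_l_g | lt_g_l].
  by apply: eq_bigr => j _; rewrite !mxE !coefMC coef_recip le_l_g.
by rewrite big1 // => j _; rewrite !mxE coefMC coef_recip leqNgt lt_g_l mul0r.
Qed.

Definition monomial_basis m g : 'M[{poly R}]_(m, m * g.+1) :=
  \matrix_(i, k) \poly_(j < g.+1) (mxvec_index i (inord j) == k)%:R.

Lemma mul_monomial_basis m g (c : 'cV[R]_(m * g.+1)) i :
  (monomial_basis m g *m map_mx polyC c) i 0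
  = \poly_(j < g.+1) c (mxvec_index i (inord j)) 0.
Proof.
apply/polyP => l; rewrite mxE coef_sum coef_poly.
under eq_bigr do rewrite !mxE coefMC coef_poly.
case: ltnP => _; last by rewrite big1 // => k _; rewrite mul0r.
rewrite (bigD1 (mxvec_index i (inord l))) //= eqxx mul1r big1 ?addr0 // => k.
by rewrite eq_sym => /negbTE ->; rewrite mul0r.
Qed.

End Polynomials.

Section UniformBound.
Variables (T : eqType) (P : nat -> T -> Prop).
Hypothesis P_succ : forall k t, P k t -> P k.+1 t.
Hypothesis P_ex : forall t, exists k, P k t.

Lemma bound_mono k k' t : (k <= k')%N -> P k t -> P k' t.
Proof.
move=> le_k_k'; rewrite -(subnK le_k_k'); elim: (k' - k)%N => // d IH /IH.
exact: P_succ.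
Qed.

Lemma uniform_bound (s : seq T) : exists K, forall t, t \in s -> P K t.
Proof.
elim: s => [|a s [K IH]]; first by exists 0%N.
have [k Pk] := P_ex a.
exists (maxn k K) => t; rewrite inE => /predU1P [->|/IH].
  exact/bound_mono/Pk/leq_maxl.
exact/bound_mono/leq_maxr.
Qed.

End UniformBound.

Lemma absz_le_of_ord (f : int -> nat) N n :
  (forall n, (N < absz n)%N -> f n = 0%N) -> 'I_(f n) -> (absz n <= N)%N.
Proof.
move=> f_supp j; rewrite leqNgt; apply/negP => /f_supp f0.
by move: j; rewrite f0 => -[].
Qed.

Lemma uniform_bound_cx (A : nzRingType) (P : nat -> A -> Prop) :
  (forall k a, P k a -> P k.+1 a) -> (forall a, exists k, P k a) ->
  forall (C : fcomplex A) N, (forall n, (N < absz n)%N -> rk C n = 0%N) ->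
  exists K, forall n i j, P K (dif C n i j).
Proof.
move=> P_succ P_ex C N C_supp.
pose degrees := [seq k%:Z - N%:Z | k <- iota 0 (N + N).+1].
pose entries n := [seq dif C n t.1 t.2 | t <- enum {: 'I_(rk C (n - 1)) * 'I_(rk C n)}].
have [K HK] := uniform_bound P_succ P_ex (flatten [seq entries n | n <- degrees]).
exists K => n i j; apply/HK/flatten_mapP; exists n.
  have le_n_N := absz_le_of_ord C_supp j.
  by apply/mapP; exists (absz (n + N%:Z)); [rewrite mem_iota; lia | lia].
exact: (map_f _ (mem_enum _ (i, j))).
Qed.

Lemma central_mul (L : nzRingType) (a b : L) :
  (forall l, GRing.comm a l) -> (forall l, GRing.comm b l) ->
  forall l, GRing.comm (a * b) l.
Proof. by move=> ca cb l; apply/commr_sym/commrM; apply/commr_sym. Qed.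

Section CentralScalar.
Variables (L : nzRingType) (a : L).
Hypothesis central_a : forall l, GRing.comm a l.

Lemma mul_mx_scalar_central m n (A : 'M[L]_(m, n)) : A *m a%:M = a *: A.
Proof.
apply/matrixP => i j; rewrite !mxE (bigD1 j) //= mxE eqxx mulr1n big1 ?addr0.
  exact/esym/central_a.
by move=> k /negbTE nkj; rewrite mxE nkj mulr0n mulr0.
Qed.

Lemma scalemxAr_central m n p (A : 'M[L]_(m, n)) (B : 'M[L]_(n, p)) :
  A *m (a *: B) = a *: (A *m B).
Proof.
apply/matrixP => i j; rewrite !mxE mulr_sumr; apply: eq_bigr => k _.
by rewrite !mxE mulrA -central_a mulrA.
Qed.

End CentralScalar.

Lemma bijective_scalar_mul (L : nzRingType) n (a b : L) :
  a * b = 1 -> b * a = 1 -> bijective (fun v : 'cV[L]_n => a%:M *m v).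
Proof.
by move=> ab ba; exists (fun v => b%:M *m v) => v /=;
  rewrite mulmxA -scalar_mxM ?ab ?ba mul1mx.
Qed.

Lemma lift_mx (A : choiceType) (B : eqType) (f : A -> B) m n (M : 'M[B]_(m, n)) :
  (forall i j, exists a, f a = M i j) -> {M' | map_mx f M' = M}.
Proof.
move=> M_lifts; have lifts i j : exists a, f a == M i j.
  by have [a /eqP] := M_lifts i j; exists a.
exists (\matrix_(i, j) xchoose (lifts i j)); apply/matrixP => i j.
by rewrite !mxE; exact/eqP/(xchooseP (lifts i j)).
Qed.

Lemma map_mx_injective (A B : Type) (f : A -> B) m n :
  injective f -> injective (map_mx f : 'M[A]_(m, n) -> 'M[B]_(m, n)).
Proof.
move=> f_inj M1 M2 /matrixP eqM; apply/matrixP => i j.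
by apply: f_inj; have := eqM i j; rewrite !mxE.
Qed.

Section LaurentRing.
Variables (R L : nzRingType) (iota : {rmorphism {poly R} -> L}) (y : L).
Hypothesis laurentL : is_laurent iota y.
Local Notation x := (iota 'X).
Local Notation jm := (laurent_minus iota y).

Lemma mulXy : x * y = 1. Proof. by case: laurentL. Qed.
Lemma mulyX : y * x = 1. Proof. by case: laurentL. Qed.
Lemma iota_inj : injective iota. Proof. by case: laurentL. Qed.

Lemma comm_iota_X p : GRing.comm (iota p) x.
Proof. by rewrite /GRing.comm -!rmorphM commr_polyX. Qed.

Lemma comm_X l : GRing.comm x l.
Proof.
case: laurentL => _ _ _ /(_ l) [p [k ->]].
apply/commrM; first exact/commr_sym/comm_iota_X.
by apply/commrX; rewrite /GRing.comm mulXy mulyX.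
Qed.

Lemma comm_y l : GRing.comm y l.
Proof.
have comm_y_iota p : GRing.comm y (iota p).
  rewrite /GRing.comm -[LHS]mulr1 -mulXy !mulrA -(mulrA y) comm_iota_X.
  by rewrite mulrA mulyX mul1r.
case: laurentL => _ _ _ /(_ l) [p [k ->]].
exact/commrM/commrX.
Qed.

Lemma comm_Xn k l : GRing.comm (x ^+ k) l.
Proof. exact/commr_sym/commrX/commr_sym/comm_X. Qed.

Lemma comm_yn k l : GRing.comm (y ^+ k) l.
Proof. exact/commr_sym/commrX/commr_sym/comm_y. Qed.

Lemma mulXnyn k : x ^+ k * y ^+ k = 1.
Proof. by rewrite -exprMn_comm ?mulXy ?expr1n //; exact: comm_X. Qed.

Lemma mulynXn k : y ^+ k * x ^+ k = 1.
Proof. by rewrite -exprMn_comm ?mulyX ?expr1n //; exact: comm_y. Qed.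

Lemma mulXnyn_le a b : (b <= a)%N -> x ^+ a * y ^+ b = x ^+ (a - b).
Proof. by move=> le_b_a; rewrite -{1}(subnK le_b_a) exprD -mulrA mulXnyn mulr1. Qed.

Definition iotaC : {rmorphism R -> L} := iota \o polyC.

Lemma iotaC_inj : injective iotaC.
Proof. by move=> a b /iota_inj/polyC_inj. Qed.

Lemma comm_y_iotaC : commr_rmorph iotaC y.
Proof. by move=> a; exact: comm_y. Qed.

Lemma laurent_minusE (q : {poly R}) : jm q = horner_morph comm_y_iotaC q.
Proof.
rewrite /horner_morph horner_coef size_map_inj_poly ?rmorph0 //; last exact: iotaC_inj.
by apply: eq_bigr => i _; rewrite coef_map.
Qed.

Lemma map_mx_laurent_minusE m n (A : 'M[{poly R}]_(m, n)) :
  map_mx jm A = map_mx (horner_morph comm_y_iotaC) A.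
Proof. by apply: eq_map_mx => q; exact: laurent_minusE. Qed.

Lemma laurent_minus_wide n (q : {poly R}) :
  (size q <= n)%N -> jm q = \sum_(i < n) iotaC q`_i * y ^+ i.
Proof.
move=> le_q_n; rewrite laurent_minusE /horner_morph (horner_coef_wide _ (n := n)).
  by apply: eq_bigr => i _; rewrite coef_map.
by rewrite size_map_inj_poly ?rmorph0 //; exact: iotaC_inj.
Qed.

Lemma iota_wide n (p : {poly R}) :
  (size p <= n)%N -> iota p = \sum_(i < n) iotaC p`_i * x ^+ i.
Proof.
move=> le_p_n; rewrite -{1}(poly_coef_wide le_p_n) poly_def rmorph_sum.
by apply: eq_bigr => i _; rewrite -mul_polyC rmorphM rmorphXn.
Qed.

Lemma laurent_minusXnM k (q : {poly R}) : jm ('X^k * q) = y ^+ k * jm q.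
Proof. by rewrite !laurent_minusE rmorphM rmorphXn /= horner_morphX. Qed.

Lemma laurent_minusN (q : {poly R}) : jm (- q) = - jm q.
Proof. by rewrite !laurent_minusE rmorphN. Qed.

Lemma mulXn_recip g (w : {poly R}) :
  (size w <= g.+1)%N -> x ^+ g * jm (recip g w) = iota w.
Proof.
move=> le_w_g; rewrite (laurent_minus_wide (size_recip g w)) (iota_wide le_w_g).
rewrite mulr_sumr [LHS](reindex_inj rev_ord_inj); apply: eq_bigr => i _ /=.
have le_i_g : (i <= g)%N by rewrite -ltnS.
rewrite subSS coef_recip leq_subr subKn // mulrA (comm_Xn g) -mulrA.
by rewrite mulXnyn_le ?leq_subr // subKn.
Qed.

Lemma mulXn_laurent_minus_eq g (u w : {poly R}) :
  x ^+ g * jm u = iota w -> (size w <= g.+1)%N /\ u = recip g w.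
Proof.
move=> E; set s := size u; set k := (s + g)%N.
(* Multiplying by x^s turns both sides into polynomials in x. *)
have Ek : recip k u = 'X^s * w.
  apply: iota_inj; rewrite -(mulXn_recip (size_recip k u)) recipK; last first.
    exact/leqW/leq_addr.
  by rewrite rmorphM rmorphXn -E exprD mulrA.
have coef_w j : w`_j = (recip k u)`_(s + j).
  by rewrite Ek coefXnM ltnNge leq_addr /= addKn.
split.
  by apply/leq_sizeP => j lt_g_j; rewrite coef_w coef_recip leq_add2l leqNgt lt_g_j.
apply/polyP => j; rewrite coef_recip; case: (leqP j g) => [le_j_g | lt_g_j].
  rewrite coef_w coef_recip leq_add2l leq_subr.
  by congr (_`_ _); rewrite /k; lia.
case: (ltnP j s) => [lt_j_s | le_s_j]; last by rewrite nth_default.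
move/polyP/(_ (k - j)%N): Ek.
rewrite coef_recip coefXnM leq_subr subKn ?ifT //; rewrite /k; lia.
Qed.

Lemma laurent_minus_inj : injective jm.
Proof.
move=> p q E; apply/eqP; rewrite -subr_eq0; apply/eqP/polyP => i.
have [_ ->] : (size (0 : {poly R})%R <= 1)%N /\ p - q = recip 0%N 0.
  apply: mulXn_laurent_minus_eq.
  by rewrite expr0 mul1r rmorph0 laurent_minusE rmorphB /= -!laurent_minusE E subrr.
by rewrite coef_recip !coef0 if_same.
Qed.

Lemma laurent_decomp l : exists s q, l = jm s + iota q.
Proof.
case: laurentL => _ _ _ /(_ l) [p [k ->]].
exists (recip k (take_poly k p)), (drop_poly k p).
rewrite -{1}(poly_take_drop k p) rmorphD mulrDl rmorphM rmorphXn -!mulrA mulXnyn mulr1.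
rewrite -(mulXn_recip (leqW (size_take_poly k p))).
by rewrite (comm_Xn k) -mulrA mulXnyn mulr1.
Qed.

Lemma twisted_cech0 b u w :
  - (x ^+ b * jm u) + y ^+ b * iota w = 0 <-> x ^+ (b + b) * jm u = iota w.
Proof.
rewrite exprD -mulrA; split=> [/eqP|<-].
  by rewrite addrC subr_eq0 => /eqP <-; rewrite mulrA mulXnyn mul1r.
by rewrite mulrA mulynXn mul1r addNr.
Qed.

Lemma twisted_cech_surj b l : exists u w, - (x ^+ b * jm u) + y ^+ b * iota w = l.
Proof.
have [s [q ->]] := laurent_decomp l.
exists (- ('X^b * s)), ('X^b * q).
rewrite laurent_minusN laurent_minusXnM mulrN opprK mulrA mulXnyn mul1r.
by rewrite rmorphM rmorphXn mulrA mulynXn mul1r.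
Qed.

Definition laurent_bounded k l :=
  (exists p, iota p = x ^+ k * l) /\ (exists q, jm q = y ^+ k * l).

Lemma laurent_bounded_succ k l : laurent_bounded k l -> laurent_bounded k.+1 l.
Proof.
case=> [[p Ep] [q Eq]]; split.
  by exists ('X * p); rewrite rmorphM Ep exprS mulrA.
by exists ('X^1 * q); rewrite laurent_minusXnM Eq expr1 exprS mulrA.
Qed.

Lemma laurent_bounded_ex l : exists k, laurent_bounded k l.
Proof.
case: laurentL => _ _ _ /(_ l) [p [k ->]].
set g := size p.
have yg : jm (recip g p) = y ^+ g * iota p.
  by rewrite -(mulXn_recip (leqnSn g)) mulrA mulynXn mul1r.
exists (g + k)%N; split.
  exists ('X^g * p); rewrite rmorphM rmorphXn exprD -mulrA.
  by rewrite [x ^+ k * _]mulrA (comm_Xn k) -mulrA mulXnyn mulr1.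
exists ('X^k * ('X^k * recip g p)); rewrite !laurent_minusXnM yg.
by rewrite -(comm_yn k (iota p)) !mulrA -!exprD [(k + k + g)%N]addnC addnA.
Qed.

Lemma twist_exponents (C : fcomplex L) : bounded_cx C ->
  exists beta : int -> nat,
    (forall n i j,
       exists p, iota p = (x ^+ beta (n - 1) * y ^+ beta n *: dif C n) i j) /\
    (forall n i j,
       exists q, jm q = (y ^+ beta (n - 1) * x ^+ beta n *: dif C n) i j).
Proof.
case=> N C_supp.
have [K HK] := uniform_bound_cx laurent_bounded_succ laurent_bounded_ex C_supp.
exists (fun n => K * absz (N%:Z - n)%R)%N.
suff shift n : 'I_(rk C n) ->
    (K * absz (N%:Z - (n - 1))%R = K + K * absz (N%:Z - n)%R)%N.
  split=> n i j; have [[p Ep] [q Eq]] := HK n i j.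
    by exists p; rewrite mxE (shift n j) exprD -(mulrA (x ^+ K)) mulXnyn mulr1.
  by exists q; rewrite mxE (shift n j) exprD -(mulrA (y ^+ K)) mulynXn mulr1.
move=> /(absz_le_of_ord C_supp) le_n_N; rewrite -mulnS; congr (_ * _)%N; lia.
Qed.

Section TwistedSheaf.
Variables (C : fcomplex L) (beta : int -> nat).
Hypothesis lift_plus : forall n i j,
  exists p, iota p = (x ^+ beta (n - 1) * y ^+ beta n *: dif C n) i j.
Hypothesis lift_minus : forall n i j,
  exists q, jm q = (y ^+ beta (n - 1) * x ^+ beta n *: dif C n) i j.

Definition twisted_sheaf : fsheaf_cx R L :=
  @FSheafCx R L (FComplex (fun n => sval (lift_mx (@lift_minus n))))
    C (FComplex (fun n => sval (lift_mx (@lift_plus n))))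
    (fun n => (x ^+ beta n)%:M) (fun n => (y ^+ beta n)%:M).

Lemma map_iota_dif_plus n : map_mx iota (dif (Vp twisted_sheaf) n)
  = x ^+ beta (n - 1) * y ^+ beta n *: dif C n.
Proof. exact: (svalP (lift_mx (@lift_plus n))). Qed.

Lemma map_laurent_minus_dif_minus n : map_mx jm (dif (Vm twisted_sheaf) n)
  = y ^+ beta (n - 1) * x ^+ beta n *: dif C n.
Proof. exact: (svalP (lift_mx (@lift_minus n))). Qed.

Lemma twisted_sheaf_strict_perfect :
  is_complex C -> bounded_cx C -> is_strict_perfect iota y twisted_sheaf.
Proof.
move=> cxC bC.
have twist_cx (a : int -> L) : (forall n l, GRing.comm (a n) l) ->
    forall n, (a (n - 1) *: dif C (n - 1)) *m (a n *: dif C n) = 0.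
  by move=> ca n; rewrite -scalemxAl scalemxAr_central // cxC !scaler0.
split.
- split; [|split] => n /=.
  + apply: (map_mx_injective laurent_minus_inj).
    rewrite !map_mx_laurent_minusE map_mxM map_mx0 -!map_mx_laurent_minusE.
    rewrite !map_laurent_minus_dif_minus.
    apply: (twist_cx (fun m => y ^+ beta (m - 1) * x ^+ beta m)) => m.
    by apply: central_mul; [exact: comm_yn | exact: comm_Xn].
  + exact: cxC.
  + apply: (map_mx_injective iota_inj).
    rewrite map_mxM map_mx0 !map_iota_dif_plus.
    apply: (twist_cx (fun m => x ^+ beta (m - 1) * y ^+ beta m)) => m.
    by apply: central_mul; [exact: comm_Xn | exact: comm_yn].
- by split; [|split]; exact: bC.
- split=> n /=.
  + rewrite map_laurent_minus_dif_minus mul_scalar_mx scalerA.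
    by rewrite mul_mx_scalar_central ?mulrA ?mulXnyn ?mul1r //; exact: comm_Xn.
  + rewrite map_iota_dif_plus mul_scalar_mx scalerA.
    by rewrite mul_mx_scalar_central ?mulrA ?mulynXn ?mul1r //; exact: comm_yn.
- split=> n.
  + exact: bijective_scalar_mul (mulXnyn _) (mulynXn _).
  + exact: bijective_scalar_mul (mulynXn _) (mulXnyn _).
Qed.

Lemma twisted_sheaf_iso : cx_iso (V0 twisted_sheaf) C.
Proof.
exists (fun=> 1%:M); split=> n; first by rewrite mulmx1 mul1mx.
by exists id => v; rewrite /= mul1mx.
Qed.

Lemma cech_twistedE n u w i : @cech R L iota y twisted_sheaf n u w i 0
  = - (x ^+ beta n * jm (u i 0)) + y ^+ beta n * iota (w i 0).
Proof. by rewrite /cech /= !mul_scalar_mx !mxE. Qed.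

Lemma twisted_sheaf_H0 n : H0_fg_free iota y twisted_sheaf n.
Proof.
set g := (beta n + beta n)%N.
exists (rk C n * g.+1)%N, (map_mx (recip g) (monomial_basis R (rk C n) g)),
  (monomial_basis R (rk C n) g).
split=> [c|u w /matrixP cech0].
  apply/matrixP => i k; rewrite ord1 cech_twistedE map_recip_mulmxC [RHS]mxE mxE.
  by apply/twisted_cech0/mulXn_recip; rewrite mul_monomial_basis size_poly.
have window i : (size (w i 0)%R <= g.+1)%N /\ u i 0 = recip g (w i 0).
  by apply/mulXn_laurent_minus_eq/twisted_cech0; rewrite -cech_twistedE cech0 mxE.
have Ew : monomial_basis R (rk C n) g *m
    map_mx polyC (mxvec (\matrix_(i, j) (w i 0)`_j))^T = w.
  apply/colP => i; apply/polyP => j; rewrite mul_monomial_basis coef_poly.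
  case: ltnP => [lt_j_g | le_g_j]; first by rewrite !mxE mxvecE mxE inordK.
  by rewrite nth_default // (leq_trans (window i).1 le_g_j).
exists (mxvec (\matrix_(i, j) (w i 0)`_j))^T; split.
  split=> //; rewrite map_recip_mulmxC Ew.
  by apply/colP => i; rewrite mxE (window i).2.
move=> c [_ ->]; apply/colP => k; case/mxvec_indexP: k => i j.
by rewrite !mxE mxvecE mxE mul_monomial_basis coef_poly ltn_ord inord_val.
Qed.

Lemma twisted_sheaf_H1 n : H1_vanishes iota y twisted_sheaf n.
Proof.
move=> v; have /fin_all_exists [uw Huw] : forall i, exists uw : {poly R} * {poly R},
    - (x ^+ beta n * jm uw.1) + y ^+ beta n * iota uw.2 = v i 0.
  by move=> i; have [u [w E]] := twisted_cech_surj (beta n) (v i 0); exists (u, w).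
exists (\col_i (uw i).1), (\col_i (uw i).2).
by apply/colP => i; rewrite cech_twistedE !mxE.
Qed.

End TwistedSheaf.

End LaurentRing.

Theorem mainTheorem4 (R L : nzRingType) (iota : {rmorphism {poly R} -> L})
  (y : L) (C : fcomplex L) :
  is_laurent iota y -> is_complex C -> bounded_cx C ->
  exists V : fsheaf_cx R L,
    [/\ is_strict_perfect iota y V,
        cx_iso (V0 V) C,
        (forall n : int, H0_fg_free iota y V n) &
        (forall n : int, H1_vanishes iota y V n)].
Proof.
move=> laurentL cxC bC.
have [beta [lift_plus lift_minus]] := twist_exponents laurentL bC.
exists (twisted_sheaf lift_plus lift_minus); split.
- exact: twisted_sheaf_strict_perfect.
- exact: twisted_sheaf_iso.
- exact: twisted_sheaf_H0.
- exact: twisted_sheaf_H1.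
Qed.
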